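(* The operator $\mathcal J:C(P)\to C(P)$ is a linear bijection (a linear automorphism of $C(P)$).
   Context: Let $R$ be an irreducible reduced crystallographic root system of rank $n$ spanning a real Euclidean space $V$; $\alpha^\vee:=2\alpha/\langle\alpha,\alpha\rangle$; $P$ the weight lattice; $R^+$ positive roots with simple roots $\alpha_1,\dots,\alpha_n$; $P^+$ the dominant weights; $A:=\{x:0<\langle x,\alpha^\vee\rangle<1\ \forall\alpha\in R^+\}$. $W_0$ finite Weyl group, $W$ extended affine Weyl group generated by $W_0$ and translations $t_\lambda$ ($\lambda\in P$); $s_j$ reflection in $\{\langle x,\alpha_j^\vee\rangle=0\}$; $\ell(w)$ = number of hyperplanes $\{\langle x,\alpha^\vee\rangle=k\}$ separating $A$ and $wA$. $w_\lambda$ = shortest element of $W_0$ with $w_\lambda\lambda\in P^+$, $\lambda_+:=w_\lambda\lambda$. $q:W\to\mathbb R\setminus\{0\}$ length multiplicative, $q_j:=q_{s_j}$. $\mathcal H_0$: finite Hecke algebra with basis $T_w$ ($w\in W_0$), $(T_j-q_j)(T_j+q_j^{-1})=0$, $T_{ww'}=T_wT_{w'}$ if lengths add. $C(P)$: functions $P\to\mathbb C$, $(wf)(\lambda)=f(w^{-1}\lambda)$. $I(\cdot)$ is the representation of $\mathcal H_0$ on $C(P)$ with $T_j\mapsto I_j:=q_js_j+(q_j-q_j^{-1})J_j$, where for $m:=\langle\lambda,\alpha_j^\vee\rangle$: $(J_jf)(\lambda)=-\sum_{k=1}^{m}f(\lambda-k\alpha_j)$ if $m>0$, $0$ if $m=0$,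 $\sum_{k=0}^{-m-1}f(\lambda+k\alpha_j)$ if $m<0$. $\mathcal J:C(P)\to C(P)$ is $(\mathcal Jf)(\lambda):=q_{t_\lambda}q_{w_\lambda}\big(I(T_{w_\lambda^{-1}})^{-1}f\big)(\lambda_+)$. *)

From Stdlib Require Import ClassicalEpsilon.
From HB Require Import structures.
From mathcomp Require Import all_boot all_order all_algebra all_field.
Set Implicit Arguments. Unset Strict Implicit. Unset Printing Implicit Defensive.
Import Order.TTheory GRing.Theory Num.Theory.
Local Open Scope ring_scope.

Section RootData.
Variables (F : realFieldType) (n : nat).
Local Notation V := 'rV[F]_n.

Definition pair (x y : V) : F := (x *m y^T) 0 0.
Definition coroot (al : V) : V := (2 / pair al al) *: al.
Definition refl (al x : V) : V := x - pair x (coroot al) *: al.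

Definition root_system (R : seq V) : Prop :=
  uniq R /\ (0 : V) \notin R /\
  row_full (\matrix_(i < size R) nth 0 R i) /\
  (forall al be, al \in R -> be \in R -> refl al be \in R) /\
  (forall al be, al \in R -> be \in R -> exists z : int, pair be (coroot al) = z%:~R) /\
  (forall al (c : F), al \in R -> c *: al \in R -> c = 1 \/ c = -1) /\
  (* irreducible: nonempty, not a union of two nonempty orthogonal parts *)
  R != [::] /\
  (forall S : pred V,
      (forall al be, al \in R -> be \in R -> S al -> ~~ S be -> pair al be = 0) ->
      (forall al, al \in R -> S al) \/ (forall al, al \in R -> ~~ S al)).

Definition regular (R : seq V) (v : V) : Prop := forall al, al \in R -> pair al v != 0.
Definition Rplus (R : seq V) (v : V) : seq V := [seq al <- R | 0 < pair al v].
Definition is_simple (R : seq V) (v : V) (be : V) : Prop :=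
  be \in Rplus R v /\
  ~ (exists b1 b2, [/\ b1 \in Rplus R v, b2 \in Rplus R v & be = b1 + b2]).
Definition simple_roots (R : seq V) (v : V) (a : 'I_n -> V) : Prop :=
  [/\ injective a, (forall j, is_simple R v (a j)) &
      (forall be, is_simple R v be -> exists j, a j = be)].

Definition inP (R : seq V) (x : V) : Prop :=
  forall al, al \in R -> exists z : int, pair x (coroot al) = z%:~R.
Definition dominant (R : seq V) (v : V) (x : V) : Prop :=
  forall al, al \in Rplus R v -> 0 <= pair x (coroot al).
Definition inA (R : seq V) (v : V) (x : V) : Prop :=
  forall al, al \in Rplus R v -> 0 < pair x (coroot al) < 1.

Definition aff := ('M[F]_n * V)%type.
Definition act (w : aff) (x : V) : V := x *m w.1 + w.2.
Definition mulW (w1 w2 : aff) : aff := (w2.1 *m w1.1, w2.2 *m w1.1 + w1.2).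
Definition idW : aff := (1%:M, 0).
Definition invW (w : aff) : aff := (invmx w.1, - (w.2 *m invmx w.1)).
Definition transl (la : V) : aff := (1%:M, la).
Definition sref (a : 'I_n -> V) (j : 'I_n) : aff :=
  (1%:M - (coroot (a j))^T *m a j, 0).
Definition wordW (a : 'I_n -> V) (u : seq 'I_n) : aff :=
  foldr (fun j w => mulW (sref a j) w) idW u.
Definition inW0 (a : 'I_n -> V) (M : 'M[F]_n) : Prop :=
  exists u, M = (wordW a u).1.
Definition inW (R : seq V) (a : 'I_n -> V) (w : aff) : Prop :=
  inW0 a w.1 /\ inP R w.2.

(* length: number of hyperplanes {<x,al^v> = k} (al in R^+, k in Z)
   separating A and wA *)
Definition separates (R : seq V) (v : V) (w : aff) (al : V) (k : int) : Prop :=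
  forall x, inA R v x ->
    (pair x (coroot al) - k%:~R) * (pair (act w x) (coroot al) - k%:~R) < 0.
Definition length_is (R : seq V) (v : V) (w : aff) (m : nat) : Prop :=
  exists s : seq (V * int),
    [/\ uniq s, size s = m &
        forall p, p \in s <-> (p.1 \in Rplus R v /\ separates R v w p.1 p.2)].
Definition len (R : seq V) (v : V) (w : aff) : nat :=
  epsilon (inhabits 0%N) (length_is R v w).

Definition length_multiplicative (R : seq V) (v : V) (a : 'I_n -> V)
    (q : aff -> F) : Prop :=
  (forall w, inW R a w -> q w != 0) /\
  (forall w w', inW R a w -> inW R a w' ->
     len R v (mulW w w') = (len R v w + len R v w')%N ->
     q (mulW w w') = q w * q w').

Definition is_wl (R : seq V) (v : V) (a : 'I_n -> V) (la : V) (w : aff) : Prop :=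
  [/\ inW0 a w.1, w.2 = 0, dominant R v (act w la) &
      forall w', inW0 a w'.1 -> w'.2 = 0 -> dominant R v (act w' la) ->
        (len R v w <= len R v w')%N].
Definition wl R v a la : aff := epsilon (inhabits idW) (is_wl R v a la).
Definition redword R v a (w : aff) : seq 'I_n :=
  epsilon (inhabits [::]) (fun u => wordW a u = w /\ size u = len R v w).

Definition weight (R : seq V) := {x : V | inP R x}.

Lemma inP0 (R : seq V) : inP R 0.
Proof. by move=> al _; exists 0; rewrite /pair mul0mx mxE. Qed.

Definition mkW (R : seq V) (x : V) : weight R :=
  match excluded_middle_informative (inP R x) with
  | left h => exist _ x h
  | right _ => exist _ 0 (@inP0 R)
  end.

Definition toZ (x : F) : int := epsilon (inhabits 0) (fun z : int => x = z%:~R).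

Variable K : fieldExtType F.

Definition CP (R : seq V) := weight R -> K.

Definition Jj (R : seq V) (a : 'I_n -> V) (j : 'I_n) (f : CP R) : CP R :=
  fun la =>
  match toZ (pair (proj1_sig la) (coroot (a j))) with
  | Posz m => - \sum_(1 <= k < m.+1) f (mkW R (proj1_sig la - k%:R *: a j))
  | Negz m => \sum_(0 <= k < m.+1) f (mkW R (proj1_sig la + k%:R *: a j))
  end.

Definition qj (q : aff -> F) (a : 'I_n -> V) (j : 'I_n) : F := q (sref a j).

Definition Iop R a q (j : 'I_n) (f : CP R) : CP R :=
  fun la => qj q a j *: f (mkW R (act (sref a j) (proj1_sig la)))
            + (qj q a j - (qj q a j)^-1) *: Jj a j f la.
(* I(T_j)^-1 = I_j - (q_j - q_j^-1), from the quadratic relation *)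
Definition Iinv R a q (j : 'I_n) (f : CP R) : CP R :=
  fun la => Iop a q j f la - (qj q a j - (qj q a j)^-1) *: f la.
(* I(T_{j1} ... T_{jr})^-1 = I(T_{jr})^-1 ... I(T_{j1})^-1 *)
Definition IinvWord R a q (u : seq 'I_n) (f : CP R) : CP R :=
  foldl (fun g j => Iinv a q j g) f u.

Definition calJ (R : seq V) (v : V) (a : 'I_n -> V) (q : aff -> F)
    (f : CP R) : CP R :=
  fun la =>
    let w := wl R v a (proj1_sig la) in
    (q (transl (proj1_sig la)) * q w) *:
      IinvWord a q (redword R v a (invW w)) f (mkW R (act w (proj1_sig la))).

End RootData.

(* Linearity is immediate: calJ is built from the operators I(T_j)^-1, which
   are combinations of reflections s_j and of the finite sums J_j.

   Bijectivity comes from triangularity.  Order the weights first by the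
   W0-invariant quadratic form Q x = sum_(be in R) <x, be^v>^2 (natural valued
   on P) and then by the length of w_x.  For every weight la,
     (calJ f)(la) = (nonzero scalar) * f la + (values of f strictly below la),
   and an operator of this shape is bijective by well-founded recursion. *)

From HB Require Import structures.
From mathcomp Require Import all_boot all_order all_algebra all_field.
From mathcomp Require Import zify ring lra.
From Stdlib Require Import ClassicalEpsilon Classical ProofIrrelevance FunctionalExtensionality.
From Stdlib Require Import Relation_Operators Lexicographic_Product Inverse_Image Wf_nat.
Set Implicit Arguments. Unset Strict Implicit. Unset Printing Implicit Defensive.
Import Order.TTheory GRing.Theory Num.Theory.
Local Open Scope ring_scope.

(* Operators that are triangular with respect to a well-founded order, with
   invertible diagonal, are bijective: if at every x the value T f x is
   c *: f x (c != 0) plus a quantity depending only on f below x, then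
   T f = h can be solved for f by well-founded recursion, and uniquely. *)
Section TriangularOperators.
Variables (F : fieldType) (M : lmodType F) (X : Type).
Variables (T : (X -> M) -> X -> M) (lt : X -> X -> Prop).
Hypothesis lt_wf : well_founded lt.
Hypothesis T_triangular : forall x, exists2 c : F, c != 0 &
  forall f g, (forall y, lt y x -> f y = g y) -> T f x - c *: f x = T g x - c *: g x.

Let diag_spec x (c : F) : Prop := c != 0 /\
  forall f g, (forall y, lt y x -> f y = g y) -> T f x - c *: f x = T g x - c *: g x.
Let diag x := epsilon (inhabits 0) (diag_spec x).
Let diagP x : diag_spec x (diag x).
Proof. by apply: epsilon_spec; have [c c_neq0 cT] := T_triangular x; exists c. Qed.

Lemma triangular_inj : injective T.
Proof.
move=> f g Tfg; apply: functional_extensionality => x.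
elim/(well_founded_ind lt_wf): x => x IH; have [diag_neq0 diagT] := diagP x.
have := diagT _ _ IH; rewrite Tfg => /addrI /eqP; rewrite eqr_opp => /eqP.
exact: scalerI.
Qed.

Definition extend_below x (rec : forall y, lt y x -> M) : X -> M :=
  fun y => match excluded_middle_informative (lt y x) with
           | left p => rec y p | right _ => 0 end.

Lemma triangular_surj h : exists f, T f = h.
Proof.
pose step x (rec : forall y, lt y x -> M) : M :=
  (diag x)^-1 *: (h x - (T (extend_below rec) x - diag x *: extend_below rec x)).
pose f := Fix lt_wf (fun _ => M) step.
have step_ext x (r1 r2 : forall y, lt y x -> M) :
    (forall y p, r1 y p = r2 y p) -> step x r1 = step x r2.
  move=> r12; rewrite /step; suff -> : extend_below r1 = extend_below r2 by [].
  apply: functional_extensionality => y; rewrite /extend_below.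
  by case: excluded_middle_informative.
have fE x : f x = step x (fun y _ => f y) := Fix_eq lt_wf (fun _ => M) step step_ext x.
exists f; apply: functional_extensionality => x; have [diag_neq0 diagT] := diagP x.
have f_below y : lt y x -> f y = @extend_below x (fun y _ => f y) y.
  by rewrite /extend_below => yx; case: excluded_middle_informative => // /(_ yx).
have := diagT _ _ f_below; set B := (_ - _ *: extend_below _ _) => TfE.
have : T f x = B + diag x *: f x by rewrite -TfE subrK.
by move=> ->; rewrite fE /step -/B scalerA divff // scale1r addrC subrK.
Qed.

Lemma triangular_bij : bijective T.
Proof.
pose g h := epsilon (inhabits (fun _ => 0)) (fun f => T f = h).
have gK h : T (g h) = h.
  exact: (epsilon_spec (inhabits (fun _ => 0)) (fun f => T f = h) (triangular_surj h)).
by exists g => // f; apply: triangular_inj; rewrite gK.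
Qed.

End TriangularOperators.

Lemma count_inj_le (T : eqType) (s1 s2 : seq T) (P1 P2 : pred T) (f : T -> T) :
  uniq s1 -> injective f ->
  (forall t, t \in s1 -> P1 t -> (f t \in s2) && P2 (f t)) ->
  (count P1 s1 <= count P2 s2)%N.
Proof.
move=> u1 f_inj H; rewrite -!size_filter -(size_map f).
apply: uniq_leq_size; first by rewrite (map_inj_uniq f_inj) filter_uniq.
move=> y /mapP [t]; rewrite mem_filter => /andP [pt ht] ->.
by rewrite mem_filter; case/andP: (H t ht pt) => -> ->.
Qed.

Lemma count_lt (T : eqType) (s : seq T) (P Q : pred T) :
  (forall t, t \in s -> P t -> Q t) -> (exists2 t, t \in s & Q t && ~~ P t) ->
  (count P s < count Q s)%N.
Proof.
move=> PQ [t ht htq].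
have -> : count Q s = count (predI Q P) s + count (predI Q (predC P)) s.
  by elim: s {ht PQ} => //= x s ->; case: (Q x); case: (P x) => /=; lia.
have -> : count (predI Q P) s = count P s.
  by apply: eq_in_count => y hy /=; case py: (P y); rewrite ?andbF ?PQ.
have : (0 < count (predI Q (predC P)) s)%N by rewrite -has_count; apply/hasP; exists t.
lia.
Qed.

Lemma subr_scale_split (R : nzRingType) (M : lmodType R) (c1 c2 : R) (A B X : M) :
  A - (c1 * c2) *: X = (A - c1 *: B) + c1 *: (B - c2 *: X).
Proof. by rewrite scalerBr scalerA addrA subrK. Qed.

Section Euclid.
Variables (F : realFieldType) (n : nat).
Local Notation V := 'rV[F]_n.
Implicit Types (x y z al : V) (M : 'M[F]_n).

Lemma pairE x y : pair x y = \sum_i x 0 i * y 0 i.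
Proof. by rewrite /pair mxE; apply: eq_bigr => i _; rewrite mxE. Qed.

Lemma pairC x y : pair x y = pair y x.
Proof. by rewrite !pairE; apply: eq_bigr => i _; rewrite mulrC. Qed.

Lemma pairDl x y z : pair (x + y) z = pair x z + pair y z.
Proof. by rewrite !pairE -big_split; apply: eq_bigr => i _; rewrite mxE mulrDl. Qed.

Lemma pairZl (t : F) x y : pair (t *: x) y = t * pair x y.
Proof. by rewrite !pairE mulr_sumr; apply: eq_bigr => i _; rewrite mxE mulrA. Qed.

Lemma pairNl x y : pair (- x) y = - pair x y.
Proof. by rewrite -scaleN1r pairZl mulN1r. Qed.

Lemma pairBl x y z : pair (x - y) z = pair x z - pair y z.
Proof. by rewrite pairDl pairNl. Qed.

Lemma pairDr x y z : pair z (x + y) = pair z x + pair z y.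
Proof. by rewrite pairC pairDl !(pairC z). Qed.

Lemma pairZr (t : F) x y : pair y (t *: x) = t * pair y x.
Proof. by rewrite pairC pairZl pairC. Qed.

Lemma pairNr x y : pair y (- x) = - pair y x.
Proof. by rewrite pairC pairNl pairC. Qed.

Lemma pairBr x y z : pair z (x - y) = pair z x - pair z y.
Proof. by rewrite pairDr pairNr. Qed.

Lemma pair_mulmx x y M : pair (x *m M) y = pair x (y *m M^T).
Proof. by rewrite /pair trmx_mul trmxK mulmxA. Qed.

Lemma pair_gt0 x : x != 0 -> 0 < pair x x.
Proof.
move=> x_neq0; rewrite lt_def pairE sumr_ge0 ?andbT => [|i _]; last first.
  by rewrite -expr2 sqr_ge0.
apply: contra x_neq0; rewrite psumr_eq0 => [/allP x0|i _]; last by rewrite -expr2 sqr_ge0.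
apply/eqP/rowP => i; have := x0 i (mem_index_enum i).
by rewrite implyTb mxE mulf_eq0 orbb => /eqP.
Qed.

Definition nonprop x y := forall t : F, x != t *: y.

Lemma strict_CS x y : y != 0 -> nonprop x y -> pair x y ^+ 2 < pair x x * pair y y.
Proof.
move=> y_neq0 xy_np; set t := pair x y / pair y y.
have yy_gt0 : 0 < pair y y := pair_gt0 y_neq0.
rewrite -subr_gt0.
have -> : pair x x * pair y y - pair x y ^+ 2 = pair y y * pair (x - t *: y) (x - t *: y).
  rewrite pairBl !pairBr !pairZl !pairZr (pairC y x) /t.
  by field; rewrite gt_eqF.
by rewrite mulr_gt0 // pair_gt0 // subr_eq0 xy_np.
Qed.

Lemma coroot_pairE al x : pair x (coroot al) = (2 / pair al al) * pair x al.
Proof. by rewrite /coroot pairZr. Qed.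

Lemma coroot_factor_gt0 al : al != 0 -> 0 < 2 / pair al al.
Proof. by move=> al_neq0; rewrite divr_gt0 ?ltr0n // pair_gt0. Qed.

Lemma pair_coroot al : al != 0 -> pair al (coroot al) = 2.
Proof.
move=> al_neq0; rewrite /coroot pairZr mulrAC -mulrA divff ?mulr1 //.
by rewrite gt_eqF // pair_gt0.
Qed.

Lemma coroot_opp al : coroot (- al) = - coroot al.
Proof. by rewrite /coroot pairNl pairNr opprK scalerN. Qed.

Lemma refl_self al : al != 0 -> refl al al = - al.
Proof. by move=> ?; rewrite /refl pair_coroot // scaler_nat mulr2n opprD addrA subrr sub0r. Qed.

Lemma reflZ al (t : F) x : refl al (t *: x) = t *: refl al x.
Proof. by rewrite /refl pairZl scalerBr scalerA. Qed.

Lemma reflB al x y : refl al (x - y) = refl al x - refl al y.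
Proof. by rewrite /refl pairBl scalerBl !opprB addrACA [RHS]addrACA [- y + _]addrC. Qed.

Lemma reflK al : al != 0 -> involutive (refl al).
Proof.
move=> al_neq0 x; rewrite {2}/refl reflB reflZ refl_self // scalerN opprK.
by rewrite /refl subrK.
Qed.

Lemma pair_refl al x y : pair (refl al x) y = pair x (refl al y).
Proof.
rewrite /refl pairBl pairBr pairZl pairZr /coroot !pairZr.
by rewrite (pairC al y) -!mulrA [pair y al * _]mulrC.
Qed.

Lemma coroot_refl al be : al != 0 -> coroot (refl al be) = refl al (coroot be).
Proof. by move=> al_neq0; rewrite /coroot reflZ pair_refl reflK. Qed.

Definition Sm al : 'M[F]_n := 1%:M - (coroot al)^T *m al.

Lemma mul_Sm al x : x *m Sm al = refl al x.
Proof.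
rewrite /Sm mulmxBr mulmx1 mulmxA /refl; congr (_ - _).
by rewrite [x *m _]mx11_scalar mul_scalar_mx.
Qed.

Lemma rowmx_ext M M' : (forall x : V, x *m M = x *m M') -> M = M'.
Proof. by move=> H; apply/row_matrixP => i; rewrite !rowE H. Qed.

Lemma Sm_tr al : (Sm al)^T = Sm al.
Proof.
rewrite /Sm linearB /= trmx1 trmx_mul trmxK /coroot; congr (_ - _).
by rewrite linearZ /= [(_ *: al)^T]linearZ /= scalemxAl.
Qed.

Definition orth M := M *m M^T == 1%:M.

Lemma pair_orth M x y : orth M -> pair (x *m M) (y *m M) = pair x y.
Proof. by move=> /eqP MMt; rewrite /pair trmx_mul -mulmxA (mulmxA M) MMt mul1mx. Qed.

Lemma orth_Sm al : al != 0 -> orth (Sm al).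
Proof.
move=> al_neq0; apply/eqP; rewrite Sm_tr.
by apply: rowmx_ext => x; rewrite mulmxA !mul_Sm reflK // mulmx1.
Qed.

Lemma orth_mul M M' : orth M -> orth M' -> orth (M *m M').
Proof.
rewrite /orth => /eqP MMt /eqP MMt'.
by rewrite trmx_mul mulmxA -(mulmxA M) MMt' mulmx1 MMt.
Qed.

Lemma orth_inv M : orth M -> invmx M = M^T.
Proof.
move=> /eqP MMt; have /mulmx1_unit [M_unit _] := MMt.
by rewrite -[invmx M]mulmx1 -MMt mulmxA mulVmx // mul1mx.
Qed.

Lemma coroot_orth M al : orth M -> coroot (al *m M) = coroot al *m M.
Proof. by move=> M_orth; rewrite /coroot pair_orth // scalemxAl. Qed.

Lemma refl_orth M al x : orth M -> refl (al *m M) (x *m M) = refl al x *m M.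
Proof. by move=> M_orth; rewrite /refl coroot_orth // pair_orth // mulmxBl scalemxAl. Qed.

End Euclid.

Section RootSystem.
Variables (F : realFieldType) (n : nat).
Local Notation V := 'rV[F]_n.
Implicit Types (x y al be : V) (u : seq 'I_n).
Variables (R : seq V) (v : V) (a : 'I_n -> V).
Hypotheses (Rroot : root_system R) (vreg : regular R v) (asimple : simple_roots R v a).
Local Notation Rp := (Rplus R v).

Lemma R_uniq : uniq R. Proof. by case: Rroot. Qed.
Lemma R_neq0 al : al \in R -> al != 0.
Proof. by case: Rroot => _ [R0 _] alR; apply: contraNneq R0 => <-. Qed.
Lemma R_refl al be : al \in R -> be \in R -> refl al be \in R.
Proof. by case: Rroot => _ [_ [_ [h _]]]; apply: h. Qed.
Lemma R_int al be : al \in R -> be \in R -> exists z : int, pair be (coroot al) = z%:~R.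
Proof. by case: Rroot => _ [_ [_ [_ [h _]]]]; apply: h. Qed.
Lemma R_reduced al (t : F) : al \in R -> t *: al \in R -> t = 1 \/ t = -1.
Proof. by case: Rroot => _ [_ [_ [_ [_ [h _]]]]]; apply: h. Qed.
Lemma R_opp al : al \in R -> - al \in R.
Proof. by move=> alR; rewrite -refl_self ?R_neq0 // R_refl. Qed.

Definition pos x := 0 < pair x v.

Lemma Rplus_mem x : (x \in Rp) = (x \in R) && pos x.
Proof. by rewrite /Rplus mem_filter andbC. Qed.

Lemma Rp_R x : x \in Rp -> x \in R.
Proof. by rewrite Rplus_mem => /andP []. Qed.

Lemma Rp_uniq : uniq Rp. Proof. exact/filter_uniq/R_uniq. Qed.

Lemma pos_opp x : x \in R -> ~~ pos x = pos (- x).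
Proof.
move=> xR; rewrite /pos pairNl oppr_gt0 -leNgt le_eqVlt.
by rewrite (negPf (vreg xR)).
Qed.

Lemma a_simple j : is_simple R v (a j). Proof. by case: asimple => _ h _; apply: h. Qed.
Lemma a_Rplus j : a j \in Rp. Proof. by case: (a_simple j). Qed.
Lemma a_R j : a j \in R. Proof. exact: Rp_R (a_Rplus j). Qed.
Lemma a_pos j : pos (a j). Proof. by have := a_Rplus j; rewrite Rplus_mem => /andP[]. Qed.
Lemma a_neq0 j : a j != 0. Proof. exact: R_neq0 (a_R j). Qed.

Lemma root_sub al be : al \in R -> be \in R -> nonprop al be ->
  0 < pair al (coroot be) -> al - be \in R.
Proof.
move=> alR beR al_np al_be_gt0.
have be_neq0 := R_neq0 beR; have al_neq0 := R_neq0 alR.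
have [z1 z1E] := R_int beR alR; have [z2 z2E] := R_int alR beR.
have pab : 0 < pair al be.
  by move: al_be_gt0; rewrite coroot_pairE pmulr_rgt0 // coroot_factor_gt0.
have z1p : (0 < z1)%R by rewrite -(ltr0z F) -z1E.
have z2p : (0 < z2)%R.
  by rewrite -(ltr0z F) -z2E coroot_pairE pmulr_rgt0 ?coroot_factor_gt0 // pairC.
have z12 : (z1 * z2 < 4)%R.
  rewrite -(ltr_int F) intrM -z1E -z2E !coroot_pairE (pairC be al).
  have aa := pair_gt0 al_neq0; have bb := pair_gt0 be_neq0.
  have -> : 2 / pair be be * pair al be * (2 / pair al al * pair al be)
      = 4 * (pair al be ^+ 2 / (pair al al * pair be be)).
    by field; rewrite ?gt_eqF.
  rewrite -[X in _ < X]mulr1 ltr_pM2l ?ltr0n //.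
  by rewrite ltr_pdivrMr ?mulr_gt0 // mul1r strict_CS.
have [z1_1|z2_1] : z1 = 1 \/ z2 = 1 by lia.
  by have := R_refl beR alR; rewrite /refl z1E z1_1 scale1r.
by have := R_opp (R_refl alR beR); rewrite /refl z2E z2_1 scale1r opprB.
Qed.

Lemma nonprop_shift x j (t : F) : nonprop x (a j) -> nonprop (x - t *: a j) (a j).
Proof.
move=> x_np s; apply/eqP => xE; move/eqP: (x_np (s + t)); apply.
by rewrite scalerDl -xE subrK.
Qed.

(* two positive roots not proportional to a simple root never add up to a
   multiple of it (induction on the multiple, using root strings) *)
Lemma pos_sum_not_simple_multiple j (c : nat) al be : al \in R -> be \in R ->
  pos al -> pos be -> nonprop al (a j) -> nonprop be (a j) ->
  al + be <> c%:R *: a j.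
Proof.
elim: c al be => [|c IH] al be alR beR pal pbe al_np be_np.
  rewrite scale0r => /eqP; rewrite addr_eq0 => /eqP alE.
  by move: pal; rewrite alE -pos_opp // pbe.
have step x y : x \in R -> y \in R -> pos x -> pos y ->
    nonprop x (a j) -> nonprop y (a j) -> x + y = c.+1%:R *: a j ->
    0 < pair x (coroot (a j)) -> False.
  move=> xR yR px py x_np y_np xyE x_gt0.
  have xjR := root_sub xR (a_R j) x_np x_gt0.
  case pxj : (pos (x - a j)).
    apply: (IH (x - a j) y) => //.
      by have := nonprop_shift 1 x_np; rewrite scale1r.
    by rewrite addrAC xyE -[c.+1]addn1 natrD scalerDl scale1r addrK.
  have pjx : pos (a j - x) by rewrite -opprB -pos_opp // pxj.
  case: (a_simple j) => _; apply; exists x, (a j - x); split.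
  - by rewrite Rplus_mem xR px.
  - by rewrite Rplus_mem pjx -opprB R_opp.
  - by rewrite addrC subrK.
move=> albeE.
have sum_gt0 : 0 < pair al (coroot (a j)) + pair be (coroot (a j)).
  by rewrite -pairDl albeE pairZl pair_coroot ?a_neq0 // mulr_gt0 ?ltr0n.
case: (ltrP 0 (pair al (coroot (a j)))) => al_gt0; first exact: (step al be).
apply: (step be al) => //; first by rewrite addrC.
by move: sum_gt0 al_gt0; set p := pair al _; set q := pair be _; lra.
Qed.

(* by reducedness, a positive root other than a j is not proportional to it *)
Lemma nonprop_simple j al : al \in R -> pos al -> al != a j -> nonprop al (a j).
Proof.
move=> alR pal al_neq t; apply/eqP => alE.
have tjR : t *: a j \in R by rewrite -alE.
have [t1|t1] := R_reduced (a_R j) tjR.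
  by move/eqP: al_neq; apply; rewrite alE t1 scale1r.
by move: pal; rewrite alE t1 scaleN1r -pos_opp ?a_R // a_pos.
Qed.

Lemma refl_simple_pos j al : al \in R -> pos al -> al != a j -> pos (refl (a j) al).
Proof.
move=> alR pal al_neq; have salR := R_refl (a_R j) alR.
case psal : (pos (refl (a j) al)) => //; exfalso.
have pbe : pos (- refl (a j) al) by rewrite -pos_opp // psal.
have [z zE] := R_int (a_R j) alR.
have sumE : al + - refl (a j) al = z%:~R *: a j by rewrite /refl zE opprB addrC subrK.
have z_gt0 : 0 < z%:~R :> F.
  have : 0 < pair (al + - refl (a j) al) v by rewrite pairDl addr_gt0.
  by rewrite sumE pairZl (pmulr_lgt0 _ (a_pos j)).
have al_np := nonprop_simple alR pal al_neq.
have be_np : nonprop (- refl (a j) al) (a j).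
  move=> t; apply/eqP => beE; move/eqP: (al_np (z%:~R - t)); apply.
  by rewrite scalerBl -beE -sumE addrK.
move: z_gt0 sumE; rewrite ltr0z; case: z {zE} => [c|c] // _.
exact: (pos_sum_not_simple_multiple alR (R_opp salR) pal pbe al_np be_np).
Qed.

Definition WM u : 'M[F]_n := (wordW a u).1.

Lemma wordW_eq u : wordW a u = (WM u, 0).
Proof. by rewrite /WM; elim: u => [|j u IH] //=; rewrite {1}IH /mulW /= mul0mx add0r. Qed.

Lemma WM_cons j u : WM (j :: u) = WM u *m Sm (a j). Proof. by []. Qed.

Lemma WM_cat u1 u2 : WM (u1 ++ u2) = WM u2 *m WM u1.
Proof.
elim: u1 => [|j u IH] /=; first by rewrite mulmx1.
by rewrite !WM_cons IH mulmxA.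
Qed.

Lemma WM_rcons u j : WM (rcons u j) = Sm (a j) *m WM u.
Proof. by rewrite -cats1 WM_cat WM_cons mul1mx. Qed.

Lemma WM_orth u : orth (WM u).
Proof.
elim: u => [|j u IH]; first by rewrite /orth trmx1 mulmx1.
by rewrite WM_cons orth_mul // orth_Sm // a_neq0.
Qed.

Lemma WM_tr u : (WM u)^T = WM (rev u).
Proof.
elim: u => [|j u IH]; first by rewrite trmx1.
by rewrite WM_cons trmx_mul IH Sm_tr rev_cons WM_rcons.
Qed.

Lemma WM_R u x : x \in R -> x *m WM u \in R.
Proof.
elim: u x => [|j u IH] x xR; first by rewrite mulmx1.
by rewrite WM_cons mulmxA mul_Sm R_refl ?a_R ?IH.
Qed.

Lemma act_wordW u x : act (wordW a u) x = x *m WM u.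
Proof. by rewrite wordW_eq /act /= addr0. Qed.

Lemma WM_rev_K u x : x *m WM u *m WM (rev u) = x.
Proof. by rewrite -mulmxA -WM_tr (eqP (WM_orth u)) mulmx1. Qed.

Lemma mem_rem_Rp j x : (x \in rem (a j) Rp) = (x != a j) && (x \in Rp).
Proof. by rewrite (mem_rem_uniq _ Rp_uniq) inE. Qed.

Lemma perm_refl_simple j : perm_eq (map (refl (a j)) (rem (a j) Rp)) (rem (a j) Rp).
Proof.
have sK := reflK (a_neq0 j).
have stable y : y \in rem (a j) Rp -> refl (a j) y \in rem (a j) Rp.
  rewrite !mem_rem_Rp !Rplus_mem => /and3P [y_neq yR py].
  rewrite R_refl ?a_R // refl_simple_pos //= andbT; apply: contraTneq py => syE.
  by rewrite -[y]sK syE refl_self ?a_neq0 // -pos_opp ?a_R // a_pos.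
apply: uniq_perm; rewrite ?(map_inj_uniq (inv_inj sK)) ?rem_uniq ?Rp_uniq //.
move=> x; apply/mapP/idP => [[y yR ->]|xR]; first exact: stable.
by exists (refl (a j) x); rewrite ?sK ?stable.
Qed.

Definition ninv (M : 'M[F]_n) := count (fun al => ~~ pos (al *m M)) Rp.

Lemma ninv_split j M : ninv M =
  (count (fun al => ~~ pos (al *m M)) (rem (a j) Rp) + ~~ pos (a j *m M))%N.
Proof. by rewrite /ninv (permP (perm_to_rem (a_Rplus j))) /= addnC. Qed.

Lemma ninv_rcons u j : ninv (WM (rcons u j)) =
  (ninv (WM u) - ~~ pos (a j *m WM u) + pos (a j *m WM u))%N.
Proof.
rewrite (ninv_split j (WM u)) addnK (ninv_split j) WM_rcons mulmxA mul_Sm.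
rewrite refl_self ?a_neq0 // mulNmx -pos_opp ?WM_R ?a_R // negbK; congr (_ + _)%N.
rewrite -(permP (perm_refl_simple j)) count_map; apply: eq_count => x /=.
by rewrite mulmxA mul_Sm reflK ?a_neq0.
Qed.

Lemma ninv_nil : ninv (WM [::]) = 0%N.
Proof.
apply/eqP; rewrite -leqn0 leqNgt -has_count; apply/hasP => -[x].
by rewrite Rplus_mem mulmx1 => /andP[_ ->].
Qed.

Lemma ninv_le u : (ninv (WM u) <= size u)%N.
Proof.
elim/last_ind: u => [|u j IH]; first by rewrite ninv_nil.
by rewrite ninv_rcons size_rcons; case: (pos _) => /=; lia.
Qed.

(* w and w^-1 have the same number of inversions (al |-> - al w) *)
Lemma ninv_rev u : ninv (WM (rev u)) = ninv (WM u).
Proof.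
suff le u' : (ninv (WM u') <= ninv (WM (rev u')))%N.
  by apply/eqP; rewrite eqn_leq le -{2}(revK u) le.
apply: (@count_inj_le _ _ _ _ _ (fun al => - (al *m WM u'))); first exact: Rp_uniq.
  by move=> x y /= /oppr_inj /(congr1 (mulmx^~ (WM (rev u')))); rewrite !WM_rev_K.
move=> x; rewrite Rplus_mem => /andP [xR px] nx.
rewrite Rplus_mem R_opp ?WM_R //= -pos_opp ?WM_R // nx /=.
by rewrite mulNmx WM_rev_K -pos_opp // px.
Qed.

Lemma exchange p g : g \in R -> pos g -> ~~ pos (g *m WM p) ->
  exists p1 i p2, p = p1 ++ i :: p2 /\ g *m WM p2 = a i.
Proof.
elim: p => [|i0 p IH] gR pg; first by rewrite mulmx1 pg.
rewrite WM_cons mulmxA mul_Sm => ngp.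
case pgp : (pos (g *m WM p)).
  suff gpE : g *m WM p = a i0 by exists [::], i0, p.
  by apply/eqP; apply: contraNT ngp => gp_neq; rewrite refl_simple_pos ?WM_R.
have [p1 [i [p2 [-> gE]]]] := IH gR pg (negbT pgp).
by exists (i0 :: p1), i, p2.
Qed.

Lemma deletion p j : ~~ pos (a j *m WM p) ->
  exists p', size p' = (size p).-1 /\ WM (rcons p j) = WM p'.
Proof.
move=> nj; have [p1 [i [p2 [pE ajE]]]] := exchange (a_R j) (a_pos j) nj.
exists (p1 ++ p2); split; first by rewrite pE !size_cat /= addnS.
rewrite WM_rcons pE WM_cat WM_cons WM_cat !mulmxA; congr (_ *m _).
apply: rowmx_ext => x; rewrite !mulmxA !mul_Sm -ajE refl_orth ?WM_orth //.
by rewrite reflK ?a_neq0.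
Qed.

Lemma find_nonreduced u : (ninv (WM u) < size u)%N ->
  exists p j s, u = p ++ j :: s /\ ~~ pos (a j *m WM p).
Proof.
elim/last_ind: u => [|u j IH]; first by rewrite ninv_nil.
rewrite ninv_rcons size_rcons.
case pj : (pos (a j *m WM u)) => /= lt_u; last by exists u, j, [::]; rewrite cats1 pj.
have [|p [j' [s [-> nj']]]] := IH; first lia.
by exists p, j', (rcons s j); rewrite rcons_cat.
Qed.

Lemma reduced u : exists u', WM u' = WM u /\ size u' = ninv (WM u').
Proof.
move: {2}(size u) (leqnn (size u)) => N; elim: N u => [|N IH] u size_u.
  by exists u; split => //; move: (ninv_le u); lia.
have := ninv_le u; rewrite leq_eqVlt => /orP [/eqP uE|lt_u]; first by exists u.
have [p [j [s [uE nj]]]] := find_nonreduced lt_u.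
have [p' [size_p' p'E]] := deletion nj.
have [|u' [u'E u'_red]] := IH (p' ++ s).
  by move: size_u; rewrite uE !size_cat size_p' /=; case: (size p) => /=; lia.
by exists u'; split => //; rewrite u'E uE -cat_rcons !WM_cat p'E.
Qed.

(* Lengths.  The fundamental alcove is nonempty; a hyperplane
   <x, al^v> = k separates A from wA iff k = 0 and w^-1 makes al negative,
   so the length of a word equals its number of inversions. *)
Lemma inA_ex : exists x0, inA R v x0.
Proof.
pose c al := pair v (coroot al).
pose S := \sum_(al <- Rp) c al.
have c_gt0 al : al \in Rp -> 0 < c al.
  rewrite Rplus_mem /c => /andP [alR pal].
  by rewrite coroot_pairE mulr_gt0 ?coroot_factor_gt0 ?R_neq0 // pairC.
have S_ge0 : 0 <= S by rewrite /S big_seq sumr_ge0 // => al /c_gt0 /ltW.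
exists ((1 + S)^-1 *: v) => al alRp; rewrite pairZl.
have S1_gt0 : 0 < 1 + S by rewrite ltr_wpDr.
rewrite mulr_gt0 ?invr_gt0 ?c_gt0 //= mulrC ltr_pdivrMr // mul1r.
have rest_ge0 : 0 <= \sum_(b <- rem al Rp) c b.
  by rewrite big_seq sumr_ge0 // => b /mem_rem /c_gt0 /ltW.
rewrite /S (big_rem _ alRp) /=; move: rest_ge0.
by set t := \sum_(_ <- _) _; set ca := c al; rewrite -/(c al) -/ca; lra.
Qed.

Lemma A_root x be : inA R v x -> be \in R ->
  if pos be then 0 < pair x (coroot be) < 1 else -1 < pair x (coroot be) < 0.
Proof.
move=> xA beR; case pbe : (pos be); first by apply: xA; rewrite Rplus_mem beR pbe.
have : - be \in Rp by rewrite Rplus_mem R_opp // -pos_opp // pbe.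
move/xA; rewrite coroot_opp pairNr => /andP [h1 h2].
by rewrite ltrNl h2 /= oppr_gt0 in h1 *; rewrite h1.
Qed.

Lemma separation_int (p q : F) (k : int) : 0 < p -> p < 1 -> -1 < q -> q < 1 ->
  (p - k%:~R) * (q - k%:~R) < 0 -> k = 0 /\ q < 0.
Proof.
move=> h1 h2 h3 h4 h.
have [k0|[k_gt0|k_lt0]] : (k = 0 \/ 0 < k \/ k < 0)%R by lia.
- by split => //; move: h; rewrite k0 !subr0 pmulr_rlt0.
- have k1 : (1 : F) <= k%:~R by rewrite ler1z; lia.
  by move: h; set K := k%:~R; nra.
- have k1 : k%:~R <= (-1 : F) by have : (k%:~R <= (- 1)%:~R :> F) by rewrite ler_int; lia.
  by move: h; set K := k%:~R; nra.
Qed.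

Lemma separates_word u al k : al \in Rp ->
  separates R v (wordW a u) al k <-> (k = 0 /\ ~~ pos (al *m WM (rev u))).
Proof.
move=> alRp; have be_R := WM_R (rev u) (Rp_R alRp).
have actE x : pair (act (wordW a u) x) (coroot al) = pair x (coroot (al *m WM (rev u))).
  by rewrite act_wordW pair_mulmx WM_tr coroot_orth // WM_orth.
have [x0 x0A] := inA_ex.
split.
  move=> /(_ x0 x0A); rewrite actE.
  have := x0A al alRp; have := A_root x0A be_R.
  case: (pos _) => /andP [h1 h2] /andP [h3 h4] sep.
    have h1' : -1 < pair x0 (coroot (al *m WM (rev u))).
      by apply: lt_trans h1; rewrite ltrN10.
    by have [_] := separation_int h3 h4 h1' h2 sep; rewrite lt_gtF.
  by have [] := separation_int h3 h4 h1 (lt_trans h2 ltr01) sep.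
move=> [-> nbe] x xA; rewrite actE !subr0.
have := xA al alRp; have := A_root xA be_R; rewrite (negPf nbe) => /andP [_ h2] /andP [h3 _].
by rewrite pmulr_rlt0.
Qed.

Lemma len_spec w m : length_is R v w m -> len R v w = m.
Proof.
have uniq_len m1 m2 : length_is R v w m1 -> length_is R v w m2 -> m1 = m2.
  move=> [s1 [u1 <- h1]] [s2 [u2 <- h2]]; apply: perm_size; apply: uniq_perm => // p.
  by apply/idP/idP => [/h1 /h2|/h2 /h1].
move=> wm; apply: (uniq_len _ m _ wm).
by apply: (epsilon_spec (inhabits 0%N) (length_is R v w)); exists m.
Qed.

Lemma len_word u : len R v (wordW a u) = ninv (WM u).
Proof.
apply: len_spec.
exists [seq (al, 0%Z) | al <- filter (fun al => ~~ pos (al *m WM (rev u))) Rp].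
split.
- by rewrite map_inj_uniq ?filter_uniq ?R_uniq // => x y [].
- by rewrite size_map size_filter -ninv_rev.
move=> [al k] /=; split.
  move=> /mapP [b]; rewrite mem_filter => /andP [nb bRp] [-> ->].
  by split => //; apply/(separates_word u 0%Z bRp).
move=> [alRp /(separates_word u k alRp) [-> nal]].
by apply/mapP; exists al => //; rewrite mem_filter nal alRp.
Qed.

Lemma len_le u : (len R v (wordW a u) <= size u)%N.
Proof. by rewrite len_word ninv_le. Qed.

Lemma invW_word u : invW (wordW a u) = wordW a (rev u).
Proof. by rewrite /invW !wordW_eq /= orth_inv ?WM_orth // WM_tr mul0mx oppr0. Qed.

Lemma len_inv u : len R v (invW (wordW a u)) = len R v (wordW a u).
Proof. by rewrite invW_word !len_word ninv_rev. Qed.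

Lemma inW0_word (w : aff F n) : inW0 a w.1 -> w.2 = 0 -> exists u, w = wordW a u.
Proof. by case: w => M mu /= [u ->] ->; exists u; rewrite wordW_eq. Qed.

Lemma inW0_wordW u : inW0 a (wordW a u).1. Proof. by exists u. Qed.

Lemma redwordP u : wordW a (redword R v a (wordW a u)) = wordW a u /\
  size (redword R v a (wordW a u)) = len R v (wordW a u).
Proof.
apply: (epsilon_spec (inhabits [::])
  (fun u' => wordW a u' = wordW a u /\ size u' = len R v (wordW a u))).
have [u' [u'E u'_red]] := reduced u.
by exists u'; split; [rewrite !wordW_eq u'E | rewrite len_word -u'E].
Qed.

(* Dominant representatives.  If x is not dominant, some simple coroot pairs
   negatively with x, and reflecting in it lowers the number of positive
   roots pairing negatively with x. *)
Lemma coroot_lt0 x al : al \in R -> (pair x (coroot al) < 0) = (pair x al < 0).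
Proof. by move=> alR; rewrite coroot_pairE pmulr_rlt0 // coroot_factor_gt0 ?R_neq0. Qed.

(* if a positive root pairs negatively with x, so does a simple root:
   decompose non-simple positive roots, by induction on their height *)
Lemma simple_neg x al : al \in Rp -> pair x (coroot al) < 0 ->
  exists j, pair x (coroot (a j)) < 0.
Proof.
pose height al := count (fun b => pair b v < pair al v) Rp.
move: {2}(height al).+1 (ltnSn (height al)) => N.
elim: N al => [|N IH] al // al_ht alRp x_al.
have alR := Rp_R alRp.
case: (classic (is_simple R v al)) => [al_simple|al_nsimple].
  by case: asimple => _ _ /(_ al al_simple) [j ajE]; exists j; rewrite ajE.
have [b1 [b2 [b1Rp b2Rp alE]]] : exists b1 b2, [/\ b1 \in Rp, b2 \in Rp & al = b1 + b2].
  by apply: NNPP => nsum; apply: al_nsimple.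
move: x_al; rewrite coroot_lt0 // alE pairDr => x_al.
have step b b' : b \in Rp -> b' \in Rp -> al = b + b' -> pair x b < 0 ->
    exists j, pair x (coroot (a j)) < 0.
  move=> bRp b'Rp albE x_b; apply: (IH b) => //; last by rewrite coroot_lt0 ?Rp_R.
  have pb' : 0 < pair b' v by move: b'Rp; rewrite Rplus_mem => /andP[].
  rewrite -ltnS; apply: leq_trans al_ht; rewrite ltnS; apply: count_lt.
    by move=> t _ /= t_lt; rewrite albE pairDl (lt_le_trans t_lt) // lerDl ltW.
  by exists b => //=; rewrite ltxx andbT albE pairDl ltrDl.
case: (ltrP (pair x b1) 0) => x_b1; first exact: (step b1 b2).
apply: (step b2 b1) => //; first by rewrite alE addrC.
by move: x_al x_b1; set p := pair x b1; set q := pair x b2; lra.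
Qed.

Definition nneg x := count (fun al => pair x (coroot al) < 0) Rp.

Lemma nneg_refl j x : pair x (coroot (a j)) < 0 -> (nneg (refl (a j) x) < nneg x)%N.
Proof.
move=> x_lt0; rewrite /nneg !(permP (perm_to_rem (a_Rplus j))) /= x_lt0.
have -> : (pair (refl (a j) x) (coroot (a j)) < 0) = false.
  rewrite /refl pairBl pairZl pair_coroot ?a_neq0 //.
  by apply/negbTE; rewrite -leNgt; move: x_lt0; set p := pair x _; lra.
rewrite add0n add1n ltnS -(permP (perm_refl_simple j)) count_map.
apply: eq_leq; apply: eq_count => b /=.
by rewrite pair_refl coroot_refl ?a_neq0 // reflK ?a_neq0.
Qed.

Lemma dominant_word x : exists u, dominant R v (x *m WM u).
Proof.
move: {2}(nneg x).+1 (ltnSn (nneg x)) => N; elim: N x => [|N IH] x // x_nneg.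
case: (classic (dominant R v x)) => [x_dom|x_ndom]; first by exists [::]; rewrite mulmx1.
have [al [alRp x_al]] : exists al, al \in Rp /\ pair x (coroot al) < 0.
  apply: NNPP => nal; apply: x_ndom => al alRp; rewrite leNgt; apply/negP => x_al.
  by apply: nal; exists al.
have [j x_j] := simple_neg alRp x_al.
have [|u u_dom] := IH (refl (a j) x); first by have := nneg_refl x_j; lia.
by exists (rcons u j); rewrite WM_rcons mulmxA mul_Sm.
Qed.

Lemma wl_spec x : is_wl R v a x (wl R v a x).
Proof.
apply: (epsilon_spec (inhabits (idW F n))).
pose P m := exists u, dominant R v (act (wordW a u) x) /\ len R v (wordW a u) = m.
pose Pb m : bool := if excluded_middle_informative (P m) then true else false.
have PbP m : Pb m <-> P m by rewrite /Pb; case: excluded_middle_informative.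
have Pb_ex : exists m, Pb m.
  have [u u_dom] := dominant_word x.
  by exists (len R v (wordW a u)); apply/PbP; exists u; rewrite act_wordW.
case: (ex_minnP Pb_ex) => m /PbP [u [u_dom u_len]] m_min.
exists (wordW a u); split; [exact: inW0_wordW | by rewrite wordW_eq | by [] |].
move=> w' w'W0 w'2 w'_dom; have [u' w'E] := inW0_word w'W0 w'2; subst w'.
by rewrite u_len; apply: m_min; apply/PbP; exists u'.
Qed.


(* The W0-invariant quadratic form Q x = sum_(be in R) <x, be^v>^2.  It takes
   natural values on the weight lattice and strictly decreases on the open
   segment between x and s_j x; it drives the well-founded order below. *)
Definition Q x := \sum_(be <- R) pair x (coroot be) ^+ 2.

Lemma perm_refl_R al : al \in R -> perm_eq (map (refl al) R) R.
Proof.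
move=> alR; have sK := reflK (R_neq0 alR).
apply: uniq_perm; rewrite ?(map_inj_uniq (inv_inj sK)) ?R_uniq //.
move=> x; apply/mapP/idP => [[y yR ->]|xR]; first exact: R_refl.
by exists (refl al x); rewrite ?sK ?R_refl.
Qed.

Lemma Q_refl al x : al \in R -> Q (refl al x) = Q x.
Proof.
move=> alR; rewrite /Q -(perm_big _ (perm_refl_R alR)) big_map.
by apply: eq_bigr => be _; rewrite pair_refl coroot_refl ?R_neq0 // reflK ?R_neq0.
Qed.

Lemma Q_word u x : Q (x *m WM u) = Q x.
Proof.
elim: u x => [|j u IH] x; first by rewrite mulmx1.
by rewrite WM_cons mulmxA mul_Sm Q_refl ?a_R ?IH.
Qed.

Lemma Q_expand x y t : Q (x - t *: y) =
  Q x - 2 * t * (\sum_(be <- R) pair x (coroot be) * pair y (coroot be))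
      + t ^+ 2 * (\sum_(be <- R) pair y (coroot be) ^+ 2).
Proof.
rewrite /Q mulr_sumr mulr_sumr -sumrB -big_split /=.
by apply: eq_bigr => be _; rewrite pairBl pairZl; ring.
Qed.

(* t |-> Q (x - t a_j) is a convex quadratic taking equal values at 0 and at
   m = <x, a_j^v> (the point s_j x), hence smaller values strictly between *)
Lemma Q_interior j x t : t * (t - pair x (coroot (a j))) < 0 -> Q (x - t *: a j) < Q x.
Proof.
set m := pair x (coroot (a j)) => t_between.
pose B := \sum_(be <- R) pair x (coroot be) * pair (a j) (coroot be).
pose A := \sum_(be <- R) pair (a j) (coroot be) ^+ 2.
have A_gt0 : 0 < A.
  rewrite /A (big_rem _ (a_R j)) /= pair_coroot ?a_neq0 //.
  have four_gt0 : (0 : F) < 2 ^+ 2 by rewrite expr2 mulr_gt0 ?ltr0n.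
  by rewrite ltr_pwDl ?sumr_ge0 // => b _; exact: sqr_ge0.
have Q_m : Q (x - m *: a j) = Q x by rewrite -/(refl (a j) x) Q_refl ?a_R.
have m_neq0 : m != 0.
  by apply: contraTneq t_between => ->; rewrite subr0 -expr2 -leNgt sqr_ge0.
move: Q_m; rewrite !Q_expand -/B -/A => Q_m.
have BE : 2 * B = m * A.
  apply: (mulfI m_neq0); move: Q_m => /eqP; rewrite -subr_eq0 => /eqP Q_m.
  by rewrite -[RHS]subr0 -Q_m; ring.
rewrite -subr_lt0; have -> : Q x - 2 * t * B + t ^+ 2 * A - Q x = A * (t * (t - m)).
  by rewrite [2 * t]mulrC -mulrA BE; ring.
by rewrite pmulr_rlt0.
Qed.

Lemma Q_ge0 x : 0 <= Q x.
Proof. by rewrite /Q sumr_ge0 // => b _; exact: sqr_ge0. Qed.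

Lemma Q_int x : inP R x -> exists N : int, Q x = N%:~R.
Proof.
move=> xP; rewrite /Q big_seq; apply: (big_ind (fun t : F => exists N : int, t = N%:~R)).
- by exists 0.
- by move=> _ _ [N1 ->] [N2 ->]; exists (N1 + N2); rewrite intrD.
- by move=> be beR; have [z ->] := xP be beR; exists (z ^+ 2); rewrite rmorphXn.
Qed.

Lemma toZ_spec (t : F) : (exists z : int, t = z%:~R) -> t = (toZ t)%:~R.
Proof. exact: epsilon_spec. Qed.

Lemma toZ_int (z : int) : toZ (z%:~R : F) = z.
Proof. by apply/esym/(@intr_inj F)/toZ_spec; exists z. Qed.

Definition Qnat x : nat := `|toZ (Q x)|%N.

Lemma Qnat_lt x y : inP R x -> inP R y -> (Q x < Q y) = (Qnat x < Qnat y)%N.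
Proof.
move=> xP yP; have := Q_ge0 x; have := Q_ge0 y.
rewrite (toZ_spec (Q_int xP)) (toZ_spec (Q_int yP)) /Qnat.
by rewrite !ler0z ltr_int; set zx := toZ _; set zy := toZ _ => h1 h2; apply/idP/idP; lia.
Qed.

Lemma inP_refl al x : al \in R -> inP R x -> inP R (refl al x).
Proof.
move=> alR xP be beR; rewrite pair_refl -coroot_refl ?R_neq0 //.
exact: xP (R_refl alR beR).
Qed.

Lemma inP_word u x : inP R x -> inP R (x *m WM u).
Proof.
elim: u x => [|j u IH] x xP; first by rewrite mulmx1.
by rewrite WM_cons mulmxA mul_Sm; apply: inP_refl (a_R j) (IH x xP).
Qed.

Lemma inP_add_simple x j (z : int) : inP R x -> inP R (x + z%:~R *: a j).
Proof.
move=> xP be beR; have [z1 z1E] := xP be beR; have [z2 z2E] := R_int beR (a_R j).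
by exists (z1 + z * z2); rewrite pairDl pairZl z1E z2E intrD intrM.
Qed.

Lemma inP_sub_simple x j (k : nat) : inP R x -> inP R (x - k%:R *: a j).
Proof. by move=> xP; rewrite -scaleNr -[k%:R]/(k%:Z%:~R) -intrN; apply: inP_add_simple. Qed.

Lemma mkW_val (la : weight R) : mkW R (proj1_sig la) = la.
Proof.
case: la => x xP; rewrite /mkW /=; case: excluded_middle_informative => // xP'.
by congr exist; apply: proof_irrelevance.
Qed.

Lemma val_mkW x : inP R x -> proj1_sig (mkW R x) = x.
Proof. by rewrite /mkW; case: excluded_middle_informative. Qed.

(* I(T_j)^-1 f at
   x is a nonzero multiple of f (s_j x) plus values of f at x and at points of
   smaller Q; iterating along a word, I(T_u)^-1 f at y is a nonzero multiple
   of f (y w_u) plus values at points that are of smaller Q or images of y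
   under shorter words. *)
Section InverseOperators.
Variables (K : fieldExtType F) (q : aff F n -> F).
Hypothesis qj_neq0 : forall j, qj q a j != 0.
Local Notation qq j := (qj q a j).
Implicit Types f g : CP K R.

Definition determined_by (phi : CP K R -> K) (D : V -> Prop) :=
  forall f g, (forall y, inP R y -> D y -> f (mkW R y) = g (mkW R y)) -> phi f = phi g.

(* Closed forms of (I(T_j)^-1 f)(x) = (I_j f - (q_j - q_j^-1) f)(x) according
   to the sign of m = <x, a_j^v>; for m > 0 the last term of J_j is f (s_j x),
   for m < 0 the first term of J_j is f x. *)
Lemma Iinv_expand j f x : inP R x -> Iinv a q j f (mkW R x) =
  qq j *: f (mkW R (refl (a j) x)) + (qq j - (qq j)^-1) *: (Jj a j f (mkW R x) - f (mkW R x)).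
Proof.
by move=> xP; rewrite /Iinv /Iop val_mkW // /act /= addr0 mul_Sm scalerBr addrA.
Qed.

Lemma Iinv_zero j f x : inP R x -> pair x (coroot (a j)) = 0 ->
  Iinv a q j f (mkW R x) = (qq j)^-1 *: f (mkW R (refl (a j) x)).
Proof.
move=> xP x0; have sxE : refl (a j) x = x by rewrite /refl x0 scale0r subr0.
rewrite Iinv_expand // /Jj val_mkW // x0 -[0]/(0%:~R) toZ_int /= big_geq // sxE.
by rewrite oppr0 sub0r scalerN -scaleNr -scalerDl opprB addrCA subrr addr0.
Qed.

Lemma Iinv_pos j f x (k : nat) : inP R x -> pair x (coroot (a j)) = k.+1%:R ->
  Iinv a q j f (mkW R x) = (qq j)^-1 *: f (mkW R (refl (a j) x))
    - (qq j - (qq j)^-1) *: (\sum_(1 <= i < k.+1) f (mkW R (x - i%:R *: a j)) + f (mkW R x)).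
Proof.
move=> xP xE; have sxE : refl (a j) x = x - k.+1%:R *: a j by rewrite /refl xE.
rewrite Iinv_expand // /Jj val_mkW // xE -[k.+1%:R]/(k.+1%:Z%:~R) toZ_int.
rewrite /= big_nat_recr //= -sxE -opprD scalerN addrAC scalerDr opprD addrCA.
by rewrite -scalerBl opprB addrC addrCA subrr addr0.
Qed.

Lemma Iinv_neg j f x (k : nat) : inP R x -> pair x (coroot (a j)) = - k.+1%:R ->
  Iinv a q j f (mkW R x) = qq j *: f (mkW R (refl (a j) x))
    + (qq j - (qq j)^-1) *: \sum_(1 <= i < k.+1) f (mkW R (x + i%:R *: a j)).
Proof.
move=> xP xE; rewrite Iinv_expand // /Jj val_mkW // xE.
rewrite -[- k.+1%:R]/((Negz k)%:~R) toZ_int big_ltn // scale0r addr0.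
by rewrite addrAC subrr add0r.
Qed.

(* on the segment from x to s_j x, the interior points have smaller Q *)
Lemma Iinv_lower j x : inP R x -> exists2 c : F, c != 0 &
  determined_by (fun f => Iinv a q j f (mkW R x) - c *: f (mkW R (refl (a j) x)))
                (fun y => y = x \/ Q y < Q x).
Proof.
move=> xP; have [z xE] := xP (a j) (a_R j).
have qq_neq0 := qj_neq0 j.
case: z xE => [[|k]|k] xE.
- exists (qq j)^-1; first by rewrite invr_eq0.
  by move=> f g _; rewrite !Iinv_zero // !subrr.
- exists (qq j)^-1; first by rewrite invr_eq0.
  move=> f g fg; rewrite (Iinv_pos f xP xE) (Iinv_pos g xP xE).
  rewrite [LHS]addrAC [RHS]addrAC !subrr !add0r.
  congr (- (_ *: (_ + _))); last by apply: fg => //; left.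
  apply: eq_big_nat => i /andP [i_gt0 i_lt]; apply: fg; first exact: inP_sub_simple.
  right; apply: Q_interior; rewrite xE pmulr_rlt0 ?ltr0n // subr_lt0 ltr_nat //.
- exists (qq j); first by [].
  have xE' : pair x (coroot (a j)) = - k.+1%:R by rewrite xE NegzE.
  move=> f g fg; rewrite (Iinv_neg f xP xE') (Iinv_neg g xP xE').
  rewrite [LHS]addrAC [RHS]addrAC !subrr !add0r; congr (_ *: _).
  apply: eq_big_nat => i /andP [i_gt0 i_lt]; apply: fg.
    by rewrite -[i%:R]/(i%:Z%:~R); apply: inP_add_simple.
  right; rewrite -[i%:R]opprK scaleNr; apply: Q_interior.
  rewrite xE' opprK nmulr_rlt0 ?oppr_lt0 ?ltr0n // addrC subr_gt0 ltr_nat //.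
Qed.

Lemma Iinv_eq j x f g : inP R x ->
  f (mkW R x) = g (mkW R x) -> f (mkW R (refl (a j) x)) = g (mkW R (refl (a j) x)) ->
  (forall y, inP R y -> Q y < Q x -> f (mkW R y) = g (mkW R y)) ->
  Iinv a q j f (mkW R x) = Iinv a q j g (mkW R x).
Proof.
move=> xP fg_x fg_sx fg_lower; have [c _ c_lower] := Iinv_lower j xP.
suff : Iinv a q j f (mkW R x) - c *: f (mkW R (refl (a j) x)) =
       Iinv a q j g (mkW R x) - c *: g (mkW R (refl (a j) x)) by rewrite fg_sx => /addIr.
by apply: c_lower => y yP [->|]; [exact: fg_x | exact: fg_lower].
Qed.

Definition below (N : nat) y z := Q z < Q y \/ exists u', (size u' < N)%N /\ z = y *m WM u'.

Lemma Iinv_below j u y f g : inP R y ->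
  (forall z, inP R z -> below (size u).+1 y z -> f (mkW R z) = g (mkW R z)) ->
  forall z, inP R z -> below (size u) y z -> Iinv a q j f (mkW R z) = Iinv a q j g (mkW R z).
Proof.
move=> yP fg z zP [Qz_lt|[u' [size_u' zE]]].
  apply: Iinv_eq => //; first by apply: fg => //; left.
    by apply: fg; [exact: inP_refl (a_R j) zP | left; rewrite Q_refl ?a_R].
  by move=> w wP Qw_lt; apply: fg => //; left; apply: lt_trans Qz_lt.
have Qz : Q z = Q y by rewrite zE Q_word.
apply: Iinv_eq => //.
- by apply: fg => //; right; exists u'; split => //; apply: ltnW.
- apply: fg; first exact: inP_refl (a_R j) zP.
  by right; exists (j :: u'); split => //; rewrite WM_cons mulmxA mul_Sm zE.
- by move=> w wP Qw_lt; apply: fg => //; left; rewrite -Qz.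
Qed.

Lemma IinvWord_lower u y : inP R y -> exists2 c : F, c != 0 &
  determined_by (fun f => IinvWord a q u f (mkW R y) - c *: f (mkW R (y *m WM u)))
                (below (size u) y).
Proof.
move=> yP; elim: u => [|j u [c1 c1_neq0 c1_lower]].
  by exists 1 => [|f g _]; rewrite ?oner_neq0 //= !mulmx1 !scale1r !subrr.
set z := y *m WM u; have zP : inP R z := inP_word u yP.
have [c2 c2_neq0 c2_lower] := Iinv_lower j zP.
exists (c1 * c2); first by rewrite mulf_neq0.
(* I(T_{j::u})^-1 f = I(T_u)^-1 (I(T_j)^-1 f); split off the two leading terms *)
have splitE f : IinvWord a q (j :: u) f (mkW R y) - (c1 * c2) *: f (mkW R (y *m WM (j :: u)))
   = (IinvWord a q u (Iinv a q j f) (mkW R y) - c1 *: Iinv a q j f (mkW R z))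
     + c1 *: (Iinv a q j f (mkW R z) - c2 *: f (mkW R (refl (a j) z))).
  have -> : IinvWord a q (j :: u) f = IinvWord a q u (Iinv a q j f) by [].
  by rewrite WM_cons mulmxA mul_Sm (subr_scale_split _ _ _ (Iinv a q j f (mkW R z))).
move=> f g fg; rewrite !splitE; congr (_ + c1 *: _).
  by apply: c1_lower; apply: Iinv_below.
apply: c2_lower => w wP [->|Qw_lt]; apply: fg => //; first by right; exists u.
by left; rewrite -(Q_word u y).
Qed.

End InverseOperators.

Definition Phi x := len R v (wl R v a x).
Definition key (la : weight R) : nat * nat := (Qnat (proj1_sig la), Phi (proj1_sig la)).
Definition ltw (nu la : weight R) := slexprod nat nat Peano.lt Peano.lt (key nu) (key la).

Lemma ltw_wf : well_founded ltw.
Proof. exact: (wf_inverse_image _ _ _ key (wf_slexprod _ _ _ _ lt_wf lt_wf)). Qed.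

Lemma wl_word x : exists u0, wl R v a x = wordW a u0.
Proof. by have [wW0 w2 _ _] := wl_spec x; apply: inW0_word. Qed.

(* If w_x = s_{u0}, the points below x *m w_x at the level of a reduced word
   of w_x^-1 are strictly below x: either Q drops, or y = x w_x w_{u'} with
   u' shorter than l(w_x), and then w_y can be taken of length <= size u'. *)
Lemma below_ltw x u0 y : inP R x -> wl R v a x = wordW a u0 -> inP R y ->
  below (size (redword R v a (invW (wl R v a x)))) (x *m WM u0) y ->
  ltw (mkW R y) (mkW R x).
Proof.
move=> xP wE yP; rewrite /ltw /key !val_mkW //.
case=> [Qy_lt|[u' [size_u' yE]]].
  by apply: left_slex; apply/ssrnat.ltP; rewrite -Qnat_lt //; rewrite Q_word in Qy_lt.
have -> : Qnat y = Qnat x by rewrite /Qnat yE !Q_word.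
apply: right_slex; apply/ssrnat.ltP.
have [_ _ wx_dom _] := wl_spec x; have [_ _ _ wl_min] := wl_spec y.
apply: leq_ltn_trans (wl_min (wordW a (rev u')) (inW0_wordW _) _ _) _.
- by rewrite wordW_eq.
- by rewrite act_wordW yE WM_rev_K -act_wordW -wE.
apply: leq_ltn_trans (len_le _) _; rewrite size_rev; apply: leq_trans size_u' _.
rewrite wE invW_word; have [_ ->] := redwordP (rev u0).
by rewrite -invW_word len_inv /Phi wE.
Qed.

Section Triangularity.
Variables (K : fieldExtType F) (q : aff F n -> F).
Hypothesis qlm : length_multiplicative R v a q.

Lemma q_neq0 w : inW R a w -> q w != 0.
Proof. by case: qlm => qW _; apply: qW. Qed.

Lemma qj_neq0 j : qj q a j != 0.
Proof.
apply: q_neq0; split; last exact: inP0.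
by exists [:: j]; rewrite /= /mulW /= mul1mx.
Qed.

(* with w_x = s_{u0}, mu = x w_x and u the chosen reduced word of w_x^-1,
   (calJ f)(x) = C (I(T_u)^-1 f)(mu) with C = q_{t_x} q_{w_x} != 0, and
   mu w_u = x is the leading point of IinvWord_lower *)
Lemma calJ_triangular_at x : inP R x -> exists2 c : F, c != 0 &
  forall f g : CP K R, (forall nu, ltw nu (mkW R x) -> f nu = g nu) ->
    calJ v a q f (mkW R x) - c *: f (mkW R x) = calJ v a q g (mkW R x) - c *: g (mkW R x).
Proof.
move=> xP; have [u0 wE] := wl_word x.
pose u := redword R v a (invW (wl R v a x)).
pose mu := x *m WM u0.
have mu_u : mu *m WM u = x.
  have [uE _] := redwordP (rev u0).
  have -> : WM u = WM (rev u0) by rewrite /u wE invW_word /WM uE.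
  exact: WM_rev_K.
have [c c_neq0 c_lower] := IinvWord_lower K qj_neq0 u (inP_word u0 xP).
pose C := q (transl x) * q (wl R v a x).
have C_neq0 : C != 0.
  rewrite mulf_neq0 // q_neq0 //; split; rewrite ?wE //.
  - by exists [::].
  - exact: inW0_wordW.
  - by rewrite wordW_eq; exact: inP0.
exists (C * c) => [|f g fg]; first by rewrite mulf_neq0.
have calJE h : calJ v a q h (mkW R x) - (C * c) *: h (mkW R x)
    = C *: (IinvWord a q u h (mkW R mu) - c *: h (mkW R (mu *m WM u))).
  by rewrite mu_u /calJ val_mkW // -/u -/C wE act_wordW -/mu scalerBr scalerA.
rewrite !calJE; congr (C *: _); apply: c_lower => y yP y_below.
exact/fg/(below_ltw xP wE yP).
Qed.

End Triangularity.

End RootSystem.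

Section Linearity.
Variables (F : realFieldType) (n : nat) (K : fieldExtType F).
Variables (R : seq 'rV[F]_n) (v : 'rV[F]_n) (a : 'I_n -> 'rV[F]_n) (q : aff F n -> F).
Implicit Types f g : CP K R.

Definition linc (c : K) f g : CP K R := fun la => c * f la + g la.

Lemma Jj_lin j c f g la : Jj a j (linc c f g) la = c * Jj a j f la + Jj a j g la.
Proof.
rewrite /Jj /linc; case: (toZ _) => m; rewrite big_split /= -mulr_sumr //.
by rewrite opprD mulrN.
Qed.

Lemma Iinv_lin j c f g : Iinv a q j (linc c f g) = linc c (Iinv a q j f) (Iinv a q j g).
Proof.
apply: functional_extensionality => la.
rewrite /Iinv /Iop Jj_lin /linc !scalerDr !scalerAr.
set A := qj q a j *: _; set B := qj q a j *: _; set d := qj q a j - _.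
set J1 := d *: Jj a j f la; set J2 := d *: Jj a j g la.
set Z1 := d *: f la; set Z2 := d *: g la.
ring.
Qed.

Lemma IinvWord_lin u c f g :
  IinvWord a q u (linc c f g) = linc c (IinvWord a q u f) (IinvWord a q u g).
Proof. by elim: u f g => [|j u IH] f g //=; rewrite Iinv_lin IH. Qed.

Lemma calJ_lin c f g : calJ v a q (linc c f g) = linc c (calJ v a q f) (calJ v a q g).
Proof.
apply: functional_extensionality => la.
by rewrite /calJ IinvWord_lin /linc scalerDr scalerAr.
Qed.

End Linearity.

Theorem mainTheorem9 (F : realFieldType) (K : fieldExtType F) (n : nat)
    (R : seq 'rV[F]_n) (v : 'rV[F]_n) (a : 'I_n -> 'rV[F]_n)
    (q : 'M[F]_n * 'rV[F]_n -> F) :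
  root_system R -> regular R v -> simple_roots R v a ->
  length_multiplicative R v a q ->
  (forall (c : K) (f g : CP K R),
      calJ v a q (fun la => c * f la + g la)
      = (fun la => c * calJ v a q f la + calJ v a q g la)) /\
  bijective (@calJ F n K R v a q).
Proof.
move=> Rroot vreg asimple qlm; split; first exact: calJ_lin.
apply: (triangular_bij (ltw_wf v a)) => la; rewrite -(mkW_val la).
exact: (calJ_triangular_at Rroot vreg asimple K qlm (proj2_sig la)).
Qed.
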